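(* Let $T$ be a tree on $N>2$ vertices with $M\ge 2$ leaves. Then $$R^+(T)\ge N(N-4)+2(N-1)\left[M+\frac{(N-M)^2}{2(N-1)-M}\right].$$
   Context: For vertices $i,j$ of a connected graph $G$, $R_{ij}$ denotes the effective resistance between $i$ and $j$ when every edge is a unit resistor. The additive degree-Kirchhoff index is $R^+(G)=\sum_{i<j}(d_i+d_j)R_{ij}$, where $d_i$ is the degree of vertex $i$. *)

From mathcomp Require Import all_boot all_order all_algebra.
Set Implicit Arguments. Unset Strict Implicit. Unset Printing Implicit Defensive.
Import Order.TTheory GRing.Theory Num.Theory.
Local Open Scope ring_scope.

Definition simple_graph n (e : rel 'I_n) : Prop :=
  symmetric e /\ irreflexive e.

Definition connected_graph n (e : rel 'I_n) : Prop :=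
  forall x y : 'I_n, connect e x y.

Definition acyclic_graph n (e : rel 'I_n) : Prop :=
  forall s : seq 'I_n, uniq s -> (3 <= size s)%N -> ~~ cycle e s.

Definition is_tree n (e : rel 'I_n) : Prop :=
  [/\ simple_graph e, connected_graph e & acyclic_graph e].

Definition deg n (e : rel 'I_n) (x : 'I_n) : nat := #|[set y | e x y]|.

Definition num_leaves n (e : rel 'I_n) : nat := #|[set x | deg e x == 1%N]|.

Definition laplacian (R : pzRingType) n (e : rel 'I_n) : 'M[R]_n :=
  \matrix_(i, j) (if i == j then (deg e i)%:R else if e i j then -1 else 0).

(* Effective resistance with unit resistors: inject unit current at i,
   extract at j; a potential w with w L = (e_i - e_j) (L symmetric) is
   w := (e_i - e_j) *m pinvmx L, and R_ij = w_i - w_j = w . (e_i - e_j). *)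
Definition eff_res (R : fieldType) n (e : rel 'I_n) (i j : 'I_n) : R :=
  let u : 'rV[R]_n := delta_mx 0 i - delta_mx 0 j in
  (u *m pinvmx (laplacian R e) *m u^T) 0 0.

Definition add_deg_kirchhoff (R : fieldType) n (e : rel 'I_n) : R :=
  \sum_(i : 'I_n) \sum_(j : 'I_n | (i < j)%N)
     ((deg e i)%:R + (deg e j)%:R) * eff_res R e i j.

(* In a tree, [R_ij >= 1] for adjacent and [R_ij >= 2] for non-adjacent vertices.
   Both follow from the Dirichlet principle [(p_i - p_j)^2 <= R_ij E(p)], where
   [E(p) = p L p^T] is the energy of a potential [p]: take the indicator of the
   side of [i] of the first edge on the path from [i] to [j] (drop 1, energy 1),
   or the difference of two such indicators for the end edges of the path when
   [i], [j] are not adjacent (drop 2, energy at most 2).  Hence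
   [R^+(T) >= sum_(i<j) (d_i + d_j) (2 - a_ij) = sum_i d_i (2 (N - 1) - d_i)].
   A degree [d] in [1, N - 1] satisfies [d (2 (N - 1) - d) >= (N - 3) d + 2 N - 2],
   with a loss of [N - 2] when [d = 1]; together with [sum_i d_i >= 2 (N - 1)]
   (a connected graph has a Laplacian of rank [N - 1], hence at least [N - 1]
   edges) the bound reduces to a polynomial inequality in [N] and [M]. *)

From mathcomp Require Import all_boot all_order all_algebra.
From mathcomp Require Import ring lra zify.
Set Implicit Arguments. Unset Strict Implicit. Unset Printing Implicit Defensive.
Import Order.TTheory GRing.Theory Num.Theory.
Local Open Scope ring_scope.

Section TreeEdges.
Variables (n : nat) (e : rel 'I_n).

Definition edge_pair (a b : 'I_n) : rel 'I_n :=
  fun x y => ((x == a) && (y == b)) || ((x == b) && (y == a)).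

Definition del_edge (a b : 'I_n) : rel 'I_n :=
  fun x y => e x y && ~~ edge_pair a b x y.

Lemma del_edge_sub a b : subrel (del_edge a b) e.
Proof. by move=> x y /andP[]. Qed.

Lemma del_edge_sym a b : symmetric e -> symmetric (del_edge a b).
Proof.
move=> se x y; rewrite /del_edge /edge_pair se; congr (_ && ~~ _).
by case: (x == a); case: (y == b); case: (x == b); case: (y == a).
Qed.

Hypothesis tree_e : is_tree e.

(* A path from [a] to [b] avoiding the edge [ab] would close a cycle with it. *)
Lemma tree_del_edge_disconnect a b : e a b -> ~~ connect (del_edge a b) a b.
Proof.
have [[se ie] _ acyc] := tree_e; move=> eab; apply/negP => /connectP [p pth].
case: (shortenP pth) => -[|x [|y q]] pth' uq _ /= lst.
- by move: eab; rewrite -lst ie.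
- by move: pth'; rewrite /= -lst /del_edge /edge_pair !eqxx andbF.
apply: (negP (acyc (a :: x :: y :: q) uq _)) => //.
rewrite /cycle rcons_path (sub_path (@del_edge_sub a b) pth') /=.
by rewrite -lst se.
Qed.

(* [x] is the first vertex on the path from [i] to [j]. *)
Lemma tree_cut_edge i j : i != j ->
  exists2 x, e i x & ~~ connect (del_edge i x) i j.
Proof.
have [[se ie] conn _] := tree_e; move=> ij.
have /connectP [p pth] := conn i j.
case: (shortenP pth) => -[|x q] /=; first by move=> _ _ _ ji; rewrite ji eqxx in ij.
move=> /andP[eix pq] /andP[iq _] _ lst.
exists x => //; apply/negP => cij; apply: (negP (tree_del_edge_disconnect eix)).
apply: (connect_trans cij).
rewrite (sym_connect_sym (del_edge_sym i x se)) lst.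
apply/connectP; exists q => //.
apply: (@sub_in_path _ (predC1 i) e); last exact: pq.
  move=> y z; rewrite !inE => yi zi eyz.
  by rewrite /del_edge /edge_pair eyz (negbTE yi) (negbTE zi) /= andbF.
by apply/allP => y yq /=; apply: contraNneq iq => <-.
Qed.

Lemma tree_deg_gt0 i : (1 < n)%N -> (0 < deg e i)%N.
Proof.
move=> n_gt1; have : (0 < #|[set~ i]|)%N by rewrite cardsC1 card_ord; lia.
case/card_gt0P => j; rewrite !inE eq_sym => ij.
have [x eix _] := tree_cut_edge ij.
by apply/card_gt0P; exists x; rewrite inE.
Qed.

End TreeEdges.

Definition kdelta (R : pzRingType) n (a c : 'I_n) : R := (a == c)%:R.

Lemma sum_kdelta_mull (R : pzRingType) n (c : 'I_n) (F : 'I_n -> R) :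
  \sum_a kdelta R a c * F a = F c.
Proof.
rewrite (bigD1 c) //= /kdelta eqxx mul1r big1 ?addr0 // => a /negbTE ->.
by rewrite mul0r.
Qed.

Lemma sum_kdelta_mulr (R : pzRingType) n (c : 'I_n) (F : 'I_n -> R) :
  \sum_a F a * kdelta R c a = F c.
Proof.
rewrite (bigD1 c) //= /kdelta eqxx mulr1 big1 ?addr0 // => a.
by rewrite eq_sym => /negbTE ->; rewrite mulr0.
Qed.

Lemma deg_sum n (e : rel 'I_n) c : deg e c = (\sum_b e c b)%N.
Proof.
by rewrite /deg -sum1_card big_mkcond /=; apply: eq_bigr => b _; rewrite inE.
Qed.

Lemma natr_deg (R : pzSemiRingType) n (e : rel 'I_n) c :
  (deg e c)%:R = \sum_b (e c b)%:R :> R.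
Proof. by rewrite deg_sum natr_sum. Qed.

Section LaplacianForm.
Variables (R : comPzRingType) (n : nat) (e : rel 'I_n).

Definition dipole (a b : 'I_n) : 'rV[R]_n := delta_mx 0 a - delta_mx 0 b.

Definition dipole_mx (a b : 'I_n) : 'M[R]_n := (dipole a b)^T *m dipole a b.

Lemma dipoleE a b c (i : 'I_1) : dipole a b i c = kdelta R a c - kdelta R b c.
Proof. by rewrite /dipole !mxE /kdelta ord1 /= ![c == _]eq_sym. Qed.

Lemma dipole_mxE a b c d :
  dipole_mx a b c d = (kdelta R a c - kdelta R b c) * (kdelta R a d - kdelta R b d).
Proof.
by rewrite /dipole_mx !mxE big_ord1 !mxE /kdelta /= ![c == _]eq_sym ![d == _]eq_sym.
Qed.

Lemma dipole_mxC a b : dipole_mx a b = dipole_mx b a.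
Proof. by apply/matrixP => c d; rewrite !dipole_mxE; ring. Qed.

Lemma mul_row_dipole_tr (p : 'rV[R]_n) a b :
  (p *m (dipole a b)^T) 0 0 = p 0 a - p 0 b.
Proof.
rewrite mxE; under eq_bigr => k _ do rewrite mxE dipoleE mulrBr.
by rewrite sumrB !sum_kdelta_mulr.
Qed.

Lemma mul_dipole_row_tr (q : 'rV[R]_n) a b :
  (dipole a b *m q^T) 0 0 = q 0 a - q 0 b.
Proof.
by rewrite -mul_row_dipole_tr -[q in RHS]trmxK -(trmx_mul (dipole a b) q^T) [RHS]mxE.
Qed.

(* Twice the Laplacian quadratic form: each edge is counted in both orientations. *)
Definition edge_form (p q : 'rV[R]_n) : R :=
  \sum_a \sum_b (e a b)%:R * ((p 0 a - p 0 b) * (q 0 a - q 0 b)).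

Lemma edge_form_addZ (p q : 'rV[R]_n) t :
  edge_form (p + t *: q) (p + t *: q) =
  edge_form p p + 2 * t * edge_form p q + t ^+ 2 * edge_form q q.
Proof.
rewrite /edge_form !mulr_sumr -!big_split /=; apply: eq_bigr => a _.
rewrite !mulr_sumr -!big_split /=; apply: eq_bigr => b _.
by rewrite !mxE; ring.
Qed.

Hypothesis simple_e : simple_graph e.

Lemma laplacian_tr : (laplacian R e)^T = laplacian R e.
Proof.
have [se _] := simple_e; apply/matrixP => x y; rewrite !mxE (se y x) eq_sym.
by case: eqVneq => // ->.
Qed.

Lemma laplacian_mul_ones : laplacian R e *m const_mx 1 = 0 :> 'cV[R]_n.
Proof.
have [_ ie] := simple_e; apply/matrixP => c z; rewrite !mxE.
under eq_bigr => k _ do rewrite !mxE mulr1.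
have -> : \sum_k (if c == k then (deg e c)%:R else if e c k then -1 else 0) =
          \sum_k (kdelta R k c * (deg e c)%:R - (e c k)%:R).
  apply: eq_bigr => k _; rewrite /kdelta eq_sym.
  by case: eqVneq => [<-|_]; [rewrite ie mul1r subr0 | case: (e c k) => /=; ring].
by rewrite sumrB sum_kdelta_mull natr_deg subrr.
Qed.

Lemma laplacian_dipole_sum :
  laplacian R e *+ 2 = \sum_a \sum_b (e a b)%:R *: dipole_mx a b.
Proof.
have [se ie] := simple_e; apply/matrixP => c d.
rewrite mulmxnE summxE.
under eq_bigr => a _ do
  (rewrite summxE; under eq_bigr => b _ do rewrite mxE dipole_mxE).
pose D := @kdelta R n.
have -> : \sum_a \sum_b (e a b)%:R * ((D a c - D b c) * (D a d - D b d)) =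
      \sum_a \sum_b (e a b)%:R * (D a c * D a d)
    + \sum_a \sum_b (e a b)%:R * (D b c * D b d)
    - \sum_a \sum_b (e a b)%:R * (D a c * D b d)
    - \sum_a \sum_b (e a b)%:R * (D b c * D a d).
  rewrite -big_split -!sumrB /=; apply: eq_bigr => a _.
  by rewrite -big_split -!sumrB /=; apply: eq_bigr => b _; ring.
rewrite [X in _ + X - _ - _]exchange_big /=.
have deg_l x : \sum_z (e x z)%:R * (D x c * D x d) = D x c * (D x d * (deg e x)%:R).
  by rewrite natr_deg -mulr_suml; ring.
have deg_r x : \sum_z (e z x)%:R * (D x c * D x d) = D x c * (D x d * (deg e x)%:R).
  by under eq_bigr => z _ do rewrite se; apply: deg_l.
have nbr x : \sum_z (e x z)%:R * (D x c * D z d) = D x c * \sum_z D z d * (e x z)%:R.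
  by rewrite mulr_sumr; apply: eq_bigr => z _; ring.
have nbr' x : \sum_z (e x z)%:R * (D z c * D x d) = D x d * \sum_z D z c * (e x z)%:R.
  by rewrite mulr_sumr; apply: eq_bigr => z _; ring.
rewrite (eq_bigr _ (fun x _ => deg_l x)) (eq_bigr _ (fun x _ => deg_r x)).
rewrite (eq_bigr _ (fun x _ => nbr x)) (eq_bigr _ (fun x _ => nbr' x)).
rewrite !sum_kdelta_mull /D /kdelta (se d c) mxE.
case: eqVneq => [<-|cd] /=; first by rewrite ie /= mulr2n; ring.
by case: (e c d) => /=; rewrite mulr2n; ring.
Qed.

Lemma laplacian_formE (p q : 'rV[R]_n) :
  (p *m laplacian R e *m q^T) 0 0 *+ 2 = edge_form p q.
Proof.
have -> : (p *m laplacian R e *m q^T) 0 0 *+ 2 = (p *m (laplacian R e *+ 2) *m q^T) 0 0.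
  by rewrite mulr2n (mulr2n (laplacian R e)) mulmxDr mulmxDl [RHS]mxE.
rewrite laplacian_dipole_sum.
rewrite mulmx_sumr mulmx_suml summxE; apply: eq_bigr => a _.
rewrite mulmx_sumr mulmx_suml summxE; apply: eq_bigr => b _.
rewrite -scalemxAr -scalemxAl mxE; congr (_ * _).
rewrite /dipole_mx !mulmxA -(mulmxA (p *m _)) mxE big_ord1.
by rewrite mul_row_dipole_tr mul_dipole_row_tr.
Qed.

End LaplacianForm.

Lemma quadratic_ge0_discr (R : realFieldType) (a b c : R) : 0 <= c ->
  (forall t, 0 <= a + 2 * t * b + t ^+ 2 * c) -> b ^+ 2 <= a * c.
Proof.
move=> c_ge0; have [->|c_neq0] := eqVneq c 0 => H.
  rewrite mulr0; have [->|b_neq0] := eqVneq b 0; first by rewrite expr0n.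
  have := H (- (a + 1) / (2 * b)); rewrite mulr0 addr0.
  have -> : 2 * (- (a + 1) / (2 * b)) * b = - (a + 1) by field; rewrite b_neq0.
  lra.
have c_gt0 : 0 < c by rewrite lt0r c_neq0 c_ge0.
have := H (- b / c).
have bE : b = (b / c) * c by rewrite divfK.
move: (b / c) bE => s ->.
have -> : - (s * c) / c = - s by field.
nra.
Qed.

Lemma connected_const (T : eqType) n (e : rel 'I_n) (f : 'I_n -> T) :
  connected_graph e -> (forall a b, e a b -> f a = f b) -> forall a b, f a = f b.
Proof.
move=> conn fe a b.
have cl : closed e [pred z | f z == f a] by move=> y z /fe eyz; rewrite !inE eyz.
by have := closed_connect cl (conn a b); rewrite !inE eqxx => /esym /eqP.
Qed.

Section LaplacianKernel.
Variables (R : realFieldType) (n : nat) (e : rel 'I_n).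
Implicit Types p q : 'rV[R]_n.

Lemma edge_form_term_ge0 (b : bool) (x : R) : 0 <= (b : nat)%:R * (x * x).
Proof. by rewrite mulr_ge0 ?ler0n // -expr2 sqr_ge0. Qed.

Lemma edge_form_ge0 p : 0 <= edge_form e p p.
Proof.
by apply: sumr_ge0 => a _; apply: sumr_ge0 => b _; apply: edge_form_term_ge0.
Qed.

Lemma edge_form_eq0 p : edge_form e p p = 0 -> forall a b, e a b -> p 0 a = p 0 b.
Proof.
move=> p0 a b eab.
have row0 : \sum_b (e a b)%:R * ((p 0 a - p 0 b) * (p 0 a - p 0 b)) = 0.
  apply: (psumr_eq0P _ p0) => // a' _.
  by apply: sumr_ge0 => b' _; apply: edge_form_term_ge0.
have : (e a b)%:R * ((p 0 a - p 0 b) * (p 0 a - p 0 b)) = 0.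
  by apply: (psumr_eq0P _ row0) => // b' _; apply: edge_form_term_ge0.
by rewrite eab mul1r => /eqP; rewrite mulf_eq0 orbb subr_eq0 => /eqP.
Qed.

Lemma edge_form_cauchy_schwarz p q :
  edge_form e p q ^+ 2 <= edge_form e p p * edge_form e q q.
Proof.
apply: quadratic_ge0_discr; first exact: edge_form_ge0.
by move=> t; rewrite -edge_form_addZ; apply: edge_form_ge0.
Qed.

Hypotheses (simple_e : simple_graph e) (conn_e : connected_graph e).

Lemma kermx_laplacian_const : (kermx (laplacian R e) <= (const_mx 1 : 'rV[R]_n))%MS.
Proof.
apply/row_subP => k; set x := row k _.
have xL : x *m laplacian R e = 0 by rewrite -row_mul mulmx_ker row0.
have x0 : edge_form e x x = 0 by rewrite -laplacian_formE // xL mul0mx mxE mul0rn.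
have cst := connected_const (f := fun a => x 0 a) conn_e (edge_form_eq0 x0).
have -> : x = x 0 k *: const_mx 1.
  apply/matrixP => i a; rewrite (ord1 i) [in RHS]mxE [const_mx _ _ _]mxE mulr1.
  exact: cst.
by rewrite scalemx_sub ?submx_refl.
Qed.

Lemma rank_laplacian : (n - 1 <= \rank (laplacian R e))%N.
Proof.
have := mxrankS kermx_laplacian_const; rewrite mxrank_ker.
have := rank_leq_row (const_mx 1 : 'rV[R]_n); lia.
Qed.

(* The rows of the Laplacian span the whole orthogonal complement of the constants. *)
Lemma dipole_sub_laplacian i j : (dipole R i j <= laplacian R e)%MS.
Proof.
set L := laplacian R e; set ones := const_mx 1 : 'cV[R]_n.
have sLH : (L <= kermx ones)%MS by apply/sub_kermxP; apply: laplacian_mul_ones.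
have suH : (dipole R i j <= kermx ones)%MS.
  apply/sub_kermxP; apply/matrixP => a b.
  have -> : ones = (const_mx 1 : 'rV[R]_n)^T by rewrite trmx_const.
  by rewrite (ord1 a) (ord1 b) mul_dipole_row_tr !mxE subrr.
have ones_neq0 : (0 < \rank ones)%N.
  rewrite lt0n mxrank_eq0; apply/eqP => /matrixP /(_ i 0).
  by rewrite !mxE => /eqP; rewrite oner_eq0.
have sHL : (kermx ones <= L)%MS.
  case: (mxrank_leqif_sup sLH) => _ <-; rewrite eqn_leq mxrankS //=.
  by rewrite mxrank_ker; have := rank_laplacian; rewrite -/L; lia.
exact: submx_trans suH sHL.
Qed.

(* Dirichlet principle: with [L w^T = u^T] for the dipole [u], Cauchy-Schwarz
   for the Laplacian form bounds [p u^T = p L w^T] by [R_ij] and the energy of [p]. *)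
Lemma eff_res_dirichlet i j p :
  (p 0 i - p 0 j) ^+ 2 * 2 <= eff_res R e i j * edge_form e p p.
Proof.
set L := laplacian R e; set u := dipole R i j; set w := u *m pinvmx L.
have wL : w *m L = u by apply: mulmxKpV; apply: dipole_sub_laplacian.
have uT : u^T = L *m w^T by rewrite -wL trmx_mul laplacian_tr.
have -> : eff_res R e i j = (w *m L *m w^T) 0 0.
  by rewrite /eff_res /= -/u -/L -/w uT mulmxA.
have -> : p 0 i - p 0 j = (p *m L *m w^T) 0 0.
  by rewrite -mul_row_dipole_tr -/u uT mulmxA.
have := edge_form_cauchy_schwarz p w.
rewrite -!laplacian_formE //; move: (edge_form_ge0 p).
move: (edge_form e p p) ((p *m L *m w^T) 0 0) ((w *m L *m w^T) 0 0) => Q A B.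
by rewrite !mulr2n; nra.
Qed.

End LaplacianKernel.

Lemma le_of_mul_le_bounded (R : realFieldType) (k c r Q : R) :
  0 < k -> 0 < c -> 0 <= Q -> Q <= c -> k * c <= r * Q -> k <= r.
Proof.
move=> k_gt0 c_gt0 Q_ge0 Q_le_c le_kc; rewrite leNgt; apply/negP => lt_rk.
by have [r_le0|r_gt0] := lerP r 0; nra.
Qed.

Section CutBounds.
Variables (R : realFieldType) (n : nat) (e : rel 'I_n).

Definition indicator (S : {set 'I_n}) : 'rV[R]_n := \row_x (x \in S)%:R.

Lemma sum_edge_pair_le (a b : 'I_n) :
  \sum_x \sum_y ((edge_pair a b x y : nat)%:R : R) <= 2.
Proof.
pose D := @kdelta R n.
have -> : 2 = \sum_x \sum_y (D x a * D y b + D x b * D y a).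
  under eq_bigr => x _ do rewrite big_split /= -!mulr_sumr.
  rewrite big_split /= -!mulr_suml.
  have sumD c : \sum_z D z c = 1.
    rewrite -[RHS](sum_kdelta_mull c (fun=> 1)).
    by apply: eq_bigr => z _; rewrite mulr1.
  by rewrite !sumD !mul1r.
apply: ler_sum => x _; apply: ler_sum => y _; rewrite /edge_pair /D /kdelta.
by case: (x == a); case: (y == b); case: (x == b); case: (y == a) => /=; lra.
Qed.

Lemma edge_form_indicator_le (S : {set 'I_n}) a b :
  (forall x y, e x y -> (x \in S) != (y \in S) -> edge_pair a b x y) ->
  edge_form e (indicator S) (indicator S) <= 2.
Proof.
move=> cut; apply: le_trans (sum_edge_pair_le a b).
apply: ler_sum => x _; apply: ler_sum => y _; rewrite !mxE.
case exy: (e x y); last by rewrite mul0r ler0n.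
move: (cut x y exy); rewrite mul1r.
by case: (x \in S); case: (y \in S); case: (edge_pair a b x y) => /= h;
  rewrite ?h //; lra.
Qed.

Lemma edge_form_indicatorB_le (S1 S2 : {set 'I_n}) :
  (forall x y, e x y ->
     ~~ (((x \in S1) != (y \in S1)) && ((x \in S2) != (y \in S2)))) ->
  edge_form e (indicator S1 - indicator S2) (indicator S1 - indicator S2) <=
  edge_form e (indicator S1) (indicator S1) + edge_form e (indicator S2) (indicator S2).
Proof.
move=> no_common; rewrite -big_split /=; apply: ler_sum => x _.
rewrite -big_split /=; apply: ler_sum => y _; rewrite !mxE.
case exy: (e x y); last by rewrite !mul0r addr0.
move: (no_common x y exy); rewrite !mul1r.
by case: (x \in S1); case: (y \in S1); case: (x \in S2); case: (y \in S2) => //= _; lra.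
Qed.

End CutBounds.

Lemma component_crossing_edge n (e : rel 'I_n) (a b : 'I_n) x y : symmetric e ->
  e x y -> (x \in [set z | connect (del_edge e a b) a z]) !=
           (y \in [set z | connect (del_edge e a b) a z]) -> edge_pair a b x y.
Proof.
move=> se exy; apply: contraR => not_ab.
have exy' : del_edge e a b x y by rewrite /del_edge exy.
have eyx' : del_edge e a b y x by rewrite (del_edge_sym a b se).
rewrite !inE; apply/eqP; apply/idP/idP => h.
  exact: connect_trans h (connect1 exy').
exact: connect_trans h (connect1 eyx').
Qed.

Section TreeResistance.
Variables (R : realFieldType) (n : nat) (e : rel 'I_n).
Hypothesis tree_e : is_tree e.

Lemma eff_res_ge1 i j : i != j -> 1 <= eff_res R e i j.
Proof.
have [simple_e conn _] := tree_e; have [se _] := simple_e; move=> ij.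
have [x eix not_ij] := tree_cut_edge tree_e ij.
set S := [set z | connect (del_edge e i x) i z].
have := eff_res_dirichlet simple_e conn i j (indicator R S).
rewrite !mxE !inE connect0 (negbTE not_ij) subr0 expr1n.
apply: le_of_mul_le_bounded; [lra | lra | exact: edge_form_ge0 |].
by apply: edge_form_indicator_le => u v; apply: component_crossing_edge.
Qed.

Lemma eff_res_ge2 i j : i != j -> ~~ e i j -> 2 <= eff_res R e i j.
Proof.
have [simple_e conn _] := tree_e; have [se _] := simple_e.
move=> ij not_eij; have ji : j != i by rewrite eq_sym.
have [x eix not_ij] := tree_cut_edge tree_e ij.
have [y ejy not_ji] := tree_cut_edge tree_e ji.
set S1 := [set z | connect (del_edge e i x) i z].
set S2 := [set z | connect (del_edge e j y) j z].
have := eff_res_dirichlet simple_e conn i j (indicator R S1 - indicator R S2).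
rewrite !mxE !inE !connect0 (negbTE not_ij) (negbTE not_ji).
have -> : ((1 - 0) - (0 - 1)) ^+ 2 * 2 = 2 * 4 :> R by ring.
apply: le_of_mul_le_bounded; [lra | lra | exact: edge_form_ge0 |].
apply: le_trans (edge_form_indicatorB_le R _) _.
  move=> u v euv; apply/negP.
  move=> /andP[/(component_crossing_edge se euv) + /(component_crossing_edge se euv)].
  case/orP => /andP[/eqP-> /eqP->]; case/orP => /andP[/eqP h1 /eqP h2].
  - by rewrite h1 eqxx in ij.
  - by rewrite -h2 eix in not_eij.
  - by rewrite -h1 eix in not_eij.
  - by rewrite h2 eqxx in ij.
have cut1 : edge_form e (indicator R S1) (indicator R S1) <= 2.
  by apply: edge_form_indicator_le => u v; apply: component_crossing_edge.
have cut2 : edge_form e (indicator R S2) (indicator R S2) <= 2.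
  by apply: edge_form_indicator_le => u v; apply: component_crossing_edge.
lra.
Qed.

End TreeResistance.

Lemma sum_pairs_sym (V : nmodType) n (F : 'I_n -> 'I_n -> V) :
  (forall i j, F i j = F j i) ->
  \sum_i \sum_j F i j =
  (\sum_(i : 'I_n) \sum_(j : 'I_n | (i < j)%N) F i j) *+ 2 + \sum_i F i i.
Proof.
move=> FC.
have split_row (i : 'I_n) : \sum_j F i j =
    \sum_(j : 'I_n | (i < j)%N) F i j + \sum_(j : 'I_n | (j < i)%N) F i j + F i i.
  rewrite (bigID (fun j : 'I_n => (i < j)%N)) /= -addrA; congr (_ + _).
  rewrite (bigID (fun j : 'I_n => (j < i)%N)) /=; congr (_ + _).
    by apply: eq_bigl => j; case: ltngtP.
  by rewrite (big_pred1 i) // => j /=; rewrite -val_eqE /=; case: ltngtP.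
rewrite (eq_bigr _ (fun i _ => split_row i)) !big_split /= mulr2n; congr (_ + _ + _).
rewrite (exchange_big_dep xpredT) //=.
by apply: eq_bigr => i _; apply: eq_big => j // _; rewrite FC.
Qed.

Lemma mxrank_sum_le (R : fieldType) m n (I : finType) (P : pred I)
    (A : I -> 'M[R]_(m, n)) :
  (\rank (\sum_(i | P i) A i)%R <= \sum_(i | P i) \rank (A i))%N.
Proof.
elim/big_rec2: _ => [|i k B _ IH]; first by rewrite mxrank0.
by apply: leq_trans (mxrank_add _ _) _; rewrite leq_add2l.
Qed.

Section EdgeCount.
Variables (n : nat) (e : rel 'I_n).
Hypothesis simple_e : simple_graph e.

Definition num_edges : nat := \sum_(i : 'I_n) \sum_(j : 'I_n | (i < j)%N) e i j.

Lemma sum_deg : (\sum_i deg e i = num_edges.*2)%N.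
Proof.
have [se ie] := simple_e.
under eq_bigr => i _ do rewrite deg_sum.
rewrite (@sum_pairs_sym nat _ (fun i j => nat_of_bool (e i j))).
  by rewrite [X in _ + X]big1 ?addr0 ?mulr2n -?addnn // => i _; rewrite ie.
by move=> i j; rewrite se.
Qed.

(* [2 L] is a sum of [num_edges] dipole matrices of rank one. *)
Lemma num_edges_ge : connected_graph e -> (n - 1 <= num_edges)%N.
Proof.
move=> conn; have [se ie] := simple_e.
pose M := \sum_(i : 'I_n) \sum_(j : 'I_n | (i < j)%N) (e i j)%:R *: dipole_mx rat i j.
have L2M : laplacian rat e *+ 2 = M *+ 2.
  rewrite laplacian_dipole_sum //.
  rewrite (@sum_pairs_sym _ _ (fun a b => (e a b)%:R *: dipole_mx rat a b)).
    by rewrite [X in _ + X]big1 ?addr0 // => i _; rewrite ie scale0r.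
  by move=> a b; rewrite se dipole_mxC.
have rankLM : \rank (laplacian rat e) = \rank M.
  have two_neq0 : 2%:R != 0 :> rat by [].
  rewrite -(mxrank_scale_nz _ two_neq0) -(mxrank_scale_nz M two_neq0).
  by rewrite !scaler_nat L2M.
apply: leq_trans (rank_laplacian rat simple_e conn) _; rewrite rankLM.
apply: leq_trans (mxrank_sum_le _ _) _; apply: leq_sum => i _.
apply: leq_trans (mxrank_sum_le _ _) _; apply: leq_sum => j _.
case: (e i j); last by rewrite scale0r mxrank0.
by rewrite scale1r; apply: leq_trans (mxrankM_maxr _ _) (rank_leq_row _).
Qed.

Lemma deg_le i : (deg e i <= n - 1)%N.
Proof.
have [_ ie] := simple_e.
have sub : [set y | e i y] \subset [set~ i].
  by apply/subsetP => y; rewrite !inE; apply: contraTneq => ->; rewrite ie.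
by apply: leq_trans (subset_leq_card sub) _; rewrite cardsC1 card_ord subn1.
Qed.

End EdgeCount.

Section DegreePairs.
Variables (R : realDomainType) (n : nat) (e : rel 'I_n).
Hypothesis simple_e : simple_graph e.
Local Notation d i := ((deg e i)%:R : R).

Lemma sum_pairs_deg_nonadj :
  \sum_(i : 'I_n) \sum_(j : 'I_n | (i < j)%N) (d i + d j) * (2 - (e i j)%:R) =
  \sum_i d i * (2 * (n%:R - 1) - d i).
Proof.
have [se ie] := simple_e.
pose G i j := (d i + d j) * (2 - (e i j)%:R).
have GC i j : G i j = G j i by rewrite /G se addrC.
have nbr_sum i : \sum_j (e j i)%:R * d i = d i * d i.
  rewrite -mulr_suml mulrC natr_deg; congr (_ * _).
  by apply: eq_bigr => j _; rewrite se.
have -> : \sum_i d i * (2 * (n%:R - 1) - d i) =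
          2 * (n%:R - 1) * \sum_i d i - \sum_i d i * d i.
  by rewrite mulr_sumr -sumrB; apply: eq_bigr => i _; ring.
have diag : \sum_i G i i = 4 * \sum_i d i.
  by rewrite mulr_sumr; apply: eq_bigr => i _; rewrite /G ie /=; ring.
have total : \sum_i \sum_j G i j = 4 * n%:R * \sum_i d i - 2 * \sum_i d i * d i.
  have -> : \sum_i \sum_j G i j = \sum_i \sum_j (2 * d i + 2 * d j)
      - \sum_i \sum_j (e i j)%:R * d i - \sum_i \sum_j (e i j)%:R * d j.
    rewrite -!sumrB; apply: eq_bigr => i _.
    by rewrite -!sumrB; apply: eq_bigr => j _; rewrite /G; ring.
  have deg_sq i : \sum_j (e i j)%:R * d i = d i * d i.
    by rewrite -mulr_suml -natr_deg mulrC.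
  rewrite (eq_bigr _ (fun i _ => deg_sq i)) [X in _ - X]exchange_big /=.
  rewrite (eq_bigr _ (fun i _ => nbr_sum i)).
  under eq_bigr => i _ do rewrite big_split /= sumr_const card_ord -mulr_sumr.
  rewrite big_split /= sumr_const card_ord.
  by rewrite sumrMnl -mulr_sumr mulr_natl; ring.
have := sum_pairs_sym GC; rewrite diag total mulr2n.
move: (\sum_(i : 'I_n) _) => X; lra.
Qed.

End DegreePairs.

Lemma add_deg_kirchhoff_tree_ge (R : realFieldType) n (e : rel 'I_n) : is_tree e ->
  \sum_(i : 'I_n) \sum_(j : 'I_n | (i < j)%N)
    ((deg e i)%:R + (deg e j)%:R) * (2 - (e i j)%:R) <= add_deg_kirchhoff R e.
Proof.
move=> tree_e; apply: ler_sum => i _; apply: ler_sum => j lt_ij.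
apply: ler_wpM2l; first by rewrite addr_ge0 ?ler0n.
have ij : i != j by rewrite -val_eqE /= ltn_eqF.
case eij: (e i j) => /=.
  by have := eff_res_ge1 R tree_e ij; lra.
by have := eff_res_ge2 R tree_e ij (negbT eij); lra.
Qed.

Section DegreeSequence.
Variables (R : realDomainType) (n : nat) (d : 'I_n -> nat).
Hypotheses (d_gt0 : forall i, (0 < d i)%N) (d_le : forall i, (d i <= n - 1)%N).
Local Notation m := #|[set i | d i == 1%N]|.

Lemma natr_card_leaves : m%:R = \sum_i (d i == 1%N)%:R :> R.
Proof.
rewrite -sum1_card natr_sum big_mkcond /=; apply: eq_bigr => i _.
by rewrite inE; case: (d i == 1%N).
Qed.

Lemma sum_degseq_le : \sum_i (d i)%:R <= n%:R * (n%:R - 1) - (n%:R - 2) * m%:R :> R.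
Proof.
have le_term i : (d i)%:R <= (n%:R - 1) - (n%:R - 2) * (d i == 1%N)%:R :> R.
  have : (d i + 1 <= n)%N by have := d_le i; have := d_gt0 i; lia.
  by rewrite -(ler_nat R) natrD; case: eqVneq => [->|_] /= le_di; lra.
apply: le_trans (ler_sum _ (fun i _ => le_term i)) _.
rewrite sumrB sumr_const card_ord -mulr_natl -mulr_sumr -natr_card_leaves; lra.
Qed.

Lemma sum_degseq_energy_ge :
  (n%:R - 3) * \sum_i (d i)%:R + n%:R * (2 * n%:R - 2) - (n%:R - 2) * m%:R <=
  \sum_i (d i)%:R * (2 * (n%:R - 1) - (d i)%:R) :> R.
Proof.
have le_term i :
    (n%:R - 3) * (d i)%:R + (2 * n%:R - 2) - (n%:R - 2) * (d i == 1%N)%:R <=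
    (d i)%:R * (2 * (n%:R - 1) - (d i)%:R) :> R.
  have : (d i + 1 <= n)%N by have := d_le i; have := d_gt0 i; lia.
  rewrite -(ler_nat R) natrD; case: eqVneq => [->|d_neq1] /= le_di; first by lra.
  have : (2 <= d i)%N by have := d_gt0 i; rewrite leq_eqVlt eq_sym (negbTE d_neq1).
  by rewrite -(ler_nat R); nra.
apply: le_trans (ler_sum _ (fun i _ => le_term i)).
rewrite sumrB big_split sumr_const card_ord -!mulr_sumr -natr_card_leaves /=.
by rewrite -mulr_natl; lra.
Qed.

End DegreeSequence.

Lemma leaf_bound_poly (R : realDomainType) (N M : R) : 3 <= N -> M <= N - 1 ->
  2 * (N - 1) * (N - M) ^+ 2 <=
  (3 * N ^+ 2 - 6 * N + 6 - M * (3 * N - 4)) * (2 * (N - 1) - M).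
Proof.
move=> N_ge3 M_le; set k := N - 3; set m := N - 1 - M.
have -> : N = k + 3 by rewrite /k; ring.
have -> : M = k + 2 - m by rewrite /m /k; ring.
have k_ge0 : 0 <= k by rewrite /k; lra.
have m_ge0 : 0 <= m by rewrite /m; lra.
have km := mulr_ge0 k_ge0 m_ge0.
have := mulr_ge0 km m_ge0; have := mulr_ge0 km k_ge0.
have := mulr_ge0 k_ge0 k_ge0; have := mulr_ge0 m_ge0 m_ge0.
nra.
Qed.

Lemma tree_bound_of_degree_sums (R : realFieldType) (N M S f : R) :
  3 <= N -> 2 <= M -> 2 * (N - 1) <= S -> S <= N * (N - 1) - (N - 2) * M ->
  (N - 3) * S + N * (2 * N - 2) - (N - 2) * M <= f ->
  N * (N - 4) + 2 * (N - 1) * (M + (N - M) ^+ 2 / (2 * (N - 1) - M)) <= f.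
Proof.
move=> N_ge3 M_ge2 S_ge S_le le_f.
have M_le : M <= N - 1 by nra.
have D_gt0 : 0 < 2 * (N - 1) - M by lra.
have := leaf_bound_poly N_ge3 M_le; rewrite -ler_pdivrMr // => key.
have -> : N * (N - 4) + 2 * (N - 1) * (M + (N - M) ^+ 2 / (2 * (N - 1) - M)) =
    N * (N - 4) + 2 * (N - 1) * M + 2 * (N - 1) * (N - M) ^+ 2 / (2 * (N - 1) - M).
  by field; rewrite lt0r_neq0.
nra.
Qed.

Theorem corollary1 (R : realFieldType) (N M : nat) (e : rel 'I_N) :
  (2 < N)%N -> is_tree e -> num_leaves e = M -> (2 <= M)%N ->
  add_deg_kirchhoff R e >=
    N%:R * (N%:R - 4) + 2 * (N%:R - 1) *
      (M%:R + (N%:R - M%:R) ^+ 2 / (2 * (N%:R - 1) - M%:R)).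
Proof.
move=> N_gt2 tree_e <- M_ge2; have [simple_e conn_e _] := tree_e.
have deg_gt0 i : (0 < deg e i)%N := tree_deg_gt0 tree_e i (ltnW N_gt2).
apply: le_trans (add_deg_kirchhoff_tree_ge R tree_e).
rewrite sum_pairs_deg_nonadj //.
apply: (tree_bound_of_degree_sums (S := \sum_i (deg e i)%:R)).
- by rewrite (ler_nat R 3).
- by rewrite (ler_nat R 2).
- rewrite -natr_sum sum_deg // -muln2 natrM.
  have := num_edges_ge simple_e conn_e; rewrite -(ler_nat R) natrB; [lra | lia].
- exact: sum_degseq_le (deg_le simple_e).
- exact: sum_degseq_energy_ge (deg_le simple_e).
Qed.
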